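(* Let $k\ge2$ and $\alpha>5$ be real. For $i=1,\dots,k-1$ let $a(i),b(i),c(i),d(i)\in\mathbb{C}$ with $|a(i)|=|d(i)|=1$ and $|b(i)|=|c(i)|=\alpha$. Let $x_1,\dots,x_k\in\mathbb{C}$ with $x_1\neq0$ satisfy $$c(1)x_1+d(1)x_2=0,\qquad b(2)x_1+c(2)x_2+d(2)x_3=0,$$ and $a(l)x_{l-2}+b(l)x_{l-1}+c(l)x_l+d(l)x_{l+1}=0$ for $3\le l\le k-1$. Then $|x_{l+1}|\ge(\alpha-2)|x_l|$ for $l=1,2,\dots,k-1$. *)

From mathcomp Require Import all_boot all_order all_algebra.
From mathcomp Require Export complex.

From mathcomp Require Import all_boot all_order all_algebra.
From mathcomp Require Import complex.
From mathcomp Require Import ring lra zify.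
Import Order.TTheory GRing.Theory Num.Theory Normc.
Local Open Scope ring_scope.
Local Open Scope complex_scope.

(* Write y_l for |x_l|.  Isolating the term c(l) x_l, whose coefficient has the
   largest modulus, the triangle inequality gives
   alpha y_l <= y_(l-2) + alpha y_(l-1) + y_(l+1), and alpha y_1 <= y_2.  By
   strong induction y_(l+1) >= (alpha - 2) y_l: in the inductive step the two
   previous instances give 2 y_l >= alpha y_(l-1) + y_(l-2), because
   (alpha - 4)(alpha - 2) >= 1. *)

Lemma growth_step (R : realFieldType) (alpha u v w z : R) :
  5 <= alpha -> 0 <= u -> (alpha - 2) * u <= v -> (alpha - 2) * v <= w ->
  alpha * w <= u + alpha * v + z -> (alpha - 2) * w <= z.
Proof.
move=> a5 u0 uv vw.
have u_le : u <= (alpha - 4) * v.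
  apply: le_trans (ler_wpM2l _ uv); last by rewrite subr_ge0; lra.
  by rewrite mulrA ler_peMl //; nra.
lra.
Qed.

Lemma lower_growth (R : realFieldType) (k : nat) (alpha : R) (y : nat -> R) :
  5 <= alpha -> (forall j, 0 <= y j) ->
  alpha * y 1%N <= y 2%N ->
  ((3 <= k)%N -> alpha * y 2%N <= alpha * y 1%N + y 3%N) ->
  (forall l, (3 <= l <= k.-1)%N ->
     alpha * y l <= y (l - 2)%N + alpha * y (l - 1)%N + y l.+1) ->
  forall l, (1 <= l <= k.-1)%N -> (alpha - 2) * y l <= y l.+1.
Proof.
move=> a5 y0 rec1 rec2 rec.
elim/ltn_ind => -[|[|[|m]]] IH /andP[l1 lk] //.
- by apply: le_trans rec1; rewrite ler_wpM2r // lerBlDr lerDl.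
- (* For l = 2 the missing term y_0 is played by 0. *)
  apply: (@growth_step _ _ 0 (y 1%N)); rewrite ?mulr0 ?add0r //.
  + by apply: IH; lia.
  + by apply: rec2; lia.
- apply: (@growth_step _ _ _ (y m.+2) _ _ a5 (y0 m.+1)).
  + by apply: IH; lia.
  + by apply: IH; lia.
  + by have := rec m.+3; rewrite !subSS !subn0; apply; lia.
Qed.

Lemma normr_normc {R : rcfType} (z : R[i]) : `|z| = (normc z)%:C.
Proof. by []. Qed.

Lemma normc_ge0 {R : rcfType} (z : R[i]) : 0 <= normc z.
Proof. by rewrite -lecR -normr_normc normr_ge0. Qed.

Lemma normc_dominant_le {R : rcfType} {alpha : R} {a b c d u v w z : R[i]} :
  `|a| <= 1 -> `|b| <= alpha%:C -> `|c| = alpha%:C -> `|d| <= 1 ->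
  a * u + b * v + c * w + d * z = 0 ->
  alpha * normc w <= normc u + alpha * normc v + normc z.
Proof.
move=> a1 balpha calpha d1 E.
rewrite -lecR !rmorphD !rmorphM /= -!normr_normc -calpha -normrM.
have -> : c * w = - (a * u + b * v + d * z) by rewrite -[LHS]subr0 -E; ring.
rewrite normrN; apply: le_trans (ler_normD _ _) _.
apply: lerD; last by rewrite normrM ler_piMl.
apply: le_trans (ler_normD _ _) _; rewrite !normrM calpha.
by apply: lerD; [rewrite ler_piMl | rewrite ler_wpM2r].
Qed.

Theorem lemma4p1 (R : rcfType) (k : nat) (alpha : R) (a b c d x : nat -> R[i]) :
  (2 <= k)%N -> 5 < alpha ->
  (forall i, (1 <= i <= k.-1)%N ->
     `|a i| = 1 /\ `|d i| = 1 /\ `|b i| = alpha%:C /\ `|c i| = alpha%:C) ->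
  x 1%N != 0 ->
  c 1%N * x 1%N + d 1%N * x 2%N = 0 ->
  ((3 <= k)%N -> b 2%N * x 1%N + c 2%N * x 2%N + d 2%N * x 3%N = 0) ->
  (forall l, (3 <= l <= k.-1)%N ->
     a l * x (l - 2)%N + b l * x (l - 1)%N + c l * x l + d l * x l.+1 = 0) ->
  forall l, (1 <= l <= k.-1)%N -> (alpha - 2)%:C * `|x l| <= `|x l.+1|.
Proof.
move=> k2 a5 coef _ rec1 rec2 rec l hl.
rewrite !normr_normc -rmorphM lecR.
have alpha0 : 0 <= alpha%:C by rewrite lecR; lra.
apply: (@lower_growth _ k _ _ (ltW a5) (fun j => normc_ge0 (x j))) hl.
- have [_ [d1 [_ calpha]]] := coef 1%N ltac:(lia).
  have E : 0 * 0 + 0 * 0 + c 1%N * x 1%N + d 1%N * x 2%N = 0.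
    by rewrite !mul0r !add0r.
  have := normc_dominant_le _ _ calpha _ E.
  by rewrite normc0 mulr0 !add0r normr0 d1 ler01 lexx; apply.
- move=> k3; have [_ [d1 [balpha calpha]]] := coef 2%N ltac:(lia).
  have E : 0 * 0 + b 2%N * x 1%N + c 2%N * x 2%N + d 2%N * x 3%N = 0.
    by rewrite mul0r add0r rec2.
  have := normc_dominant_le _ _ calpha _ E.
  by rewrite normc0 add0r normr0 d1 balpha ler01 !lexx; apply.
- move=> m hm; have [a1 [d1 [balpha calpha]]] := coef m ltac:(lia).
  by apply: normc_dominant_le calpha _ (rec m hm); rewrite ?a1 ?d1 ?balpha lexx.
Qed.
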